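(* Let $K$ and $L$ be sets of positive integers, and suppose $(X,\mathcal{G},\mathcal{A})$ is a $(K,1)$-GDD with group sizes in $L$ such that (1) for every $k\in K$ there is a nested $(4,1)$-GDD of type $3^k$, and (2) for every $\ell\in L$ there is a nested $(3\ell+1,4,1)$-BIBD. Then there is a nested $(3|X|+1,4,1)$-BIBD.
   Context: A $(K,1)$-GDD with group sizes in $L$ is a triple $(X,\mathcal{G},\mathcal{A})$ where $\mathcal{G}$ is a partition of the point set $X$ into groups with $|G|\in L$ for all $G\in\mathcal{G}$, and $\mathcal{A}$ is a set of blocks with $|A|\in K$, each block meeting each group in at most one point, and every pair of points from different groups lying in exactly one block. A $(k,\lambda)$-GDD of type $t^u$ is such a structure with $tu$ points, $u$ groups of size $t$, all blocks of size $k$ (blocks forming a multiset) and every pair from different groups in exactly $\lambda$ blocks; a partial one has ''at most $\lambda$''. It is nested if there is $\phi:\mathcal{A}\to X$ with $(X,\mathcal{G},\{A\cup\{\phi(A)\}\})$ a partial $(k+1,\lambda+1)$-GDD of type $t^u$. A $(v,k,\lambda)$-BIBD is a set $X$ of $v$ points with a multiset $\mathcal{A}$ of $k$-subsets such that every pair of distinct points lies in exactly $\lambda$ blocks (partial: at most $\lambda$); it is nested if there is $\phi:\mathcal{A}\to X$ such that $\{A\cup\{\phi(A)\}:A\in\mathcal{A}\}$ is the block multiset of a partial $(v,k+1,\lambda+1)$-BIBD (in particular $\phi(A)\notin A$). *)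

From mathcomp Require Import all_boot.
Set Implicit Arguments. Unset Strict Implicit. Unset Printing Implicit Defensive.

Section Designs.
Variable T : finType.

Definition diff_groups (G : {set {set T}}) (x y : T) : Prop :=
  ~ (exists2 Gr, Gr \in G & (x \in Gr) && (y \in Gr)).

Definition meets_groups_once (G : {set {set T}}) (B : {set T}) : Prop :=
  forall Gr, Gr \in G -> #|B :&: Gr| <= 1.

Definition pair_count (bs : seq {set T}) (x y : T) : nat :=
  count (fun B : {set T} => (x \in B) && (y \in B)) bs.

Definition KGDD (K L : nat -> Prop) (G : {set {set T}}) (A : {set {set T}}) : Prop :=
  [/\ partition G [set: T],
      (forall Gr, Gr \in G -> L #|Gr|),
      (forall B, B \in A -> K #|B|),
      (forall B, B \in A -> meets_groups_once G B)
    & (forall x y, diff_groups G x y ->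
         #|[set B in A | (x \in B) && (y \in B)]| = 1)].

(* (k,lam)-GDD of type t^u (partial = true: "at most lam") ; blocks a multiset *)
Definition GDD_gen (partial : bool) (k lam t u : nat)
    (G : {set {set T}}) (bs : seq {set T}) : Prop :=
  [/\ [/\ #|T| = t * u, partition G [set: T], #|G| = u &
         (forall Gr, Gr \in G -> #|Gr| = t)],
      (forall B, B \in bs -> #|B| = k),
      (forall B, B \in bs -> meets_groups_once G B)
    & (forall x y, diff_groups G x y ->
         if partial then pair_count bs x y <= lam else pair_count bs x y == lam)].

(* the blocks A ∪ {phi(A)}, phi given as a list of points indexed like bs *)
Definition extend_blocks (bs : seq {set T}) (ps : seq T) : seq {set T} :=
  [seq p.2 |: p.1 | p <- zip bs ps].

Definition nested_GDD (k lam t u : nat) (G : {set {set T}}) (bs : seq {set T}) : Prop :=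
  GDD_gen false k lam t u G bs /\
  exists ps : seq T, size ps = size bs /\
    GDD_gen true k.+1 lam.+1 t u G (extend_blocks bs ps).

Definition BIBD_gen (partial : bool) (v k lam : nat) (bs : seq {set T}) : Prop :=
  [/\ #|T| = v,
      (forall B, B \in bs -> #|B| = k)
    & (forall x y, x != y ->
         if partial then pair_count bs x y <= lam else pair_count bs x y == lam)].

Definition nested_BIBD (v k lam : nat) (bs : seq {set T}) : Prop :=
  BIBD_gen false v k lam bs /\
  exists ps : seq T, size ps = size bs /\
    BIBD_gen true v k.+1 lam.+1 (extend_blocks bs ps).

End Designs.

From mathcomp Require Import all_boot.
Set Implicit Arguments. Unset Strict Implicit. Unset Printing Implicit Defensive.

(* Triple every point of X and add a point at infinity.  On the infinite point
   together with the triples over a group G, put a nested (3|G|+1,4,1)-BIBD; on the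
   triples over a block B, put a nested (4,1)-GDD of type 3^|B| whose groups are the
   triples themselves.  A pair of new points lies in exactly one of these ingredients:
   that of the group of X containing both underlying points (or the other point's
   group, when one point is infinite) if there is one, and otherwise that of the
   unique block of the (K,1)-GDD through them.  Each ingredient covers its pairs
   once and its nesting covers them at most twice, so the union of the ingredients
   is a nested (3|X|+1,4,1)-BIBD. *)

Section PairCount.
Variable T : finType.
Implicit Types (bs : seq {set T}) (ps : seq T).

Lemma pair_count0 bs x y :
  (forall B, B \in bs -> ~~ ((x \in B) && (y \in B))) -> pair_count bs x y = 0.
Proof. by move=> notxy; apply/eqP; rewrite -leqn0 leqNgt -has_count; apply/hasPn. Qed.

Lemma pair_count_cat bs1 bs2 x y :
  pair_count (bs1 ++ bs2) x y = pair_count bs1 x y + pair_count bs2 x y.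
Proof. exact: count_cat. Qed.

Lemma extend_blocks_cat bs1 bs2 ps1 ps2 : size bs1 = size ps1 ->
  extend_blocks (bs1 ++ bs2) (ps1 ++ ps2) = extend_blocks bs1 ps1 ++ extend_blocks bs2 ps2.
Proof. by move=> eq_sz; rewrite /extend_blocks zip_cat ?map_cat. Qed.

End PairCount.

Section NestedDesign.
Variable T : finType.
Implicit Types (w : T -> T -> nat) (bs : seq {set T}) (ps : seq T).

Definition nested_design w bs ps : Prop :=
  [/\ size ps = size bs,
      (forall B, B \in bs -> #|B| = 4),
      (forall B, B \in extend_blocks bs ps -> #|B| = 5),
      (forall x y, x != y -> pair_count bs x y = w x y)
    & (forall x y, x != y -> pair_count (extend_blocks bs ps) x y <= 2 * w x y)].

Lemma nested_design_eq w1 w2 bs ps :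
  (forall x y, x != y -> w1 x y = w2 x y) ->
  nested_design w1 bs ps -> nested_design w2 bs ps.
Proof.
by move=> eq_w [sz h4 h5 h1 h2]; split=> // x y xy; rewrite -eq_w ?h1 ?h2.
Qed.

Lemma nested_design_nil : nested_design (fun _ _ => 0) [::] [::].
Proof. by []. Qed.

Lemma nested_design_cat w1 w2 bs1 bs2 ps1 ps2 :
  nested_design w1 bs1 ps1 -> nested_design w2 bs2 ps2 ->
  nested_design (fun x y => w1 x y + w2 x y) (bs1 ++ bs2) (ps1 ++ ps2).
Proof.
move=> [sz1 h41 h51 h11 h21] [sz2 h42 h52 h12 h22].
rewrite /nested_design extend_blocks_cat //; split=> [||||x y xy].
- by rewrite !size_cat sz1 sz2.
- by move=> B; rewrite mem_cat => /orP [/h41 | /h42].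
- by move=> B; rewrite mem_cat => /orP [/h51 | /h52].
- by move=> x y xy; rewrite pair_count_cat h11 ?h12.
- by rewrite pair_count_cat mulnDr leq_add ?h21 ?h22.
Qed.

Lemma nested_design_sum (I : Type) (r : seq I) (P : pred I) (w : I -> T -> T -> nat) :
  (forall i, P i -> exists bs ps, nested_design (w i) bs ps) ->
  exists bs ps, nested_design (fun x y => \sum_(i <- r | P i) w i x y) bs ps.
Proof.
move=> designs; elim: r => [|i r [bs [ps IH]]].
  exists [::], [::]; apply: nested_design_eq nested_design_nil => x y _.
  by rewrite big_nil.
have [Pi | notPi] := boolP (P i); last first.
  by exists bs, ps; apply: nested_design_eq IH => x y _; rewrite big_cons (negbTE notPi).
have [bs1 [ps1 D1]] := designs i Pi.
exists (bs1 ++ bs), (ps1 ++ ps).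
by apply: nested_design_eq (nested_design_cat D1 IH) => x y _; rewrite big_cons Pi.
Qed.

Lemma nested_BIBDP bs :
  nested_BIBD #|T| 4 1 bs <-> exists ps, nested_design (fun _ _ => 1) bs ps.
Proof.
split=> [[[_ h4 h1] [ps [sz [_ h5 h2]]]] | [ps [sz h4 h5 h1 h2]]].
  by exists ps; split=> // x y /h1/eqP.
by split; [|exists ps]; split=> // x y /h1 ->.
Qed.

End NestedDesign.

Section Image.
Variables (T U : finType) (f : T -> U).
Hypothesis f_inj : injective f.
Implicit Types (bs : seq {set T}) (ps : seq T).

Definition imset_blocks bs : seq {set U} := [seq f @: B | B : {set T} <- bs].

Lemma pair_count_image bs (a b : T) :
  pair_count (imset_blocks bs) (f a) (f b) = pair_count bs a b.
Proof.
by rewrite /pair_count /imset_blocks count_map; apply: eq_count => B /=; rewrite !mem_imset.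
Qed.

Lemma pair_count_image_out bs u v : ~~ ((u \in codom f) && (v \in codom f)) ->
  pair_count (imset_blocks bs) u v = 0.
Proof.
move=> out; apply: pair_count0 => _ /mapP [B _ ->]; apply: contra out.
by case/andP=> /imsetP [a _ ->] /imsetP [b _ ->]; rewrite !codom_f.
Qed.

Lemma extend_blocks_image bs ps :
  extend_blocks (imset_blocks bs) (map f ps) = imset_blocks (extend_blocks bs ps).
Proof.
rewrite /imset_blocks /extend_blocks.
by elim: bs ps => [|B bs IH] [|p ps] //=; rewrite IH imsetU1.
Qed.

Lemma nested_design_image (w : U -> U -> nat) bs ps :
  nested_design (fun a b => w (f a) (f b)) bs ps ->
  (forall u v, u != v -> 0 < w u v -> (u \in codom f) && (v \in codom f)) ->
  nested_design w (imset_blocks bs) (map f ps).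
Proof.
move=> [sz h4 h5 h1 h2] w_codom.
have pairP u v : u != v -> (exists a b, [/\ u = f a, v = f b & a != b]) \/
    ~~ ((u \in codom f) && (v \in codom f)) /\ w u v = 0.
  move=> uv; have [/andP [/codomP [a ua] /codomP [b vb]] | out] := boolP (_ && _).
    by left; exists a, b; rewrite -(inj_eq f_inj) -ua -vb.
  by right; split=> //; apply/eqP; rewrite eqn0Ngt; apply: contra out; apply: w_codom.
split.
- by rewrite !size_map.
- by move=> _ /mapP [B /h4 <- ->]; rewrite card_imset.
- by rewrite extend_blocks_image => _ /mapP [B /h5 <- ->]; rewrite card_imset.
- move=> u v /pairP [[a [b [-> -> ab]]] | [out ->]].
    by rewrite pair_count_image h1.
  by rewrite pair_count_image_out.
- rewrite extend_blocks_image => u v /pairP [[a [b [-> -> ab]]] | [out ->]].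
    by rewrite pair_count_image h2.
  by rewrite pair_count_image_out.
Qed.

End Image.

Section Partition.
Variables (T : finType) (P : {set {set T}}).
Hypothesis partP : partition P [set: T].

Let coverP x : x \in cover P.
Proof. by case/and3P: partP => /eqP ->; rewrite inE. Qed.

Let trivP : trivIset P.
Proof. by case/and3P: partP. Qed.

Lemma pblockT_mem x : pblock P x \in P.
Proof. exact: pblock_mem. Qed.

Lemma mem_pblockT x : x \in pblock P x.
Proof. by rewrite mem_pblock. Qed.

Lemma diff_groupsE x y : diff_groups P x y <-> pblock P x != pblock P y.
Proof.
split=> [notxy | /eqP differ [Gr PGr /andP [xGr yGr]]].
  apply/eqP=> same; apply: notxy; exists (pblock P x); rewrite ?pblockT_mem //.
  by rewrite mem_pblockT same mem_pblockT.
by apply: differ; rewrite !(def_pblock trivP PGr).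
Qed.

Lemma sum_pblock2 x y :
  \sum_(Gr in P) ((x \in Gr) && (y \in Gr) : nat) = (pblock P x == pblock P y).
Proof.
rewrite (bigD1 (pblock P x)) ?pblockT_mem //= mem_pblockT eq_pblock // big1 ?addn0 //.
move=> Gr /andP [PGr notpx]; apply/eqP; rewrite eqb0; apply: contraNN notpx.
by case/andP=> xGr _; rewrite (def_pblock trivP PGr).
Qed.

Lemma meets_groups_once_pblock B x y : meets_groups_once P B -> x != y ->
  pblock P x = pblock P y -> ~~ ((x \in B) && (y \in B)).
Proof.
move=> once xy same; apply/negP=> /andP [xB yB].
have := once _ (pblockT_mem x); apply/negP; rewrite -ltnNge.
have : [set x; y] \subset B :&: pblock P x.
  apply/subsetP=> z; rewrite !inE => /orP [] /eqP ->.
    by rewrite xB mem_pblockT.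
  by rewrite yB same mem_pblockT.
by move/subset_leq_card; rewrite cards2 xy.
Qed.

End Partition.

Lemma nested_GDD_design (T : finType) t u (GT : {set {set T}}) (bs : seq {set T}) :
  nested_GDD 4 1 t u GT bs ->
  exists ps, nested_design (fun a b => pblock GT a != pblock GT b) bs ps.
Proof.
move=> [[[_ partGT _ _] h4 once1 h1] [ps [sz [_ h5 once2 h2]]]].
exists ps; split=> // a b ab.
- have [same | /(diff_groupsE partGT) differ] := eqVneq (pblock GT a) (pblock GT b).
    by apply: pair_count0 => B /once1 /meets_groups_once_pblock; apply.
  exact/eqP/h1.
- have [same | /(diff_groupsE partGT) differ] := eqVneq (pblock GT a) (pblock GT b).
    by rewrite pair_count0 // => B /once2 /meets_groups_once_pblock; apply.
  exact: h2.
Qed.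

Section SetBijection.
Variables (T U : finType) (R : {set T}) (S : {set U}) (u0 : U).

(* [u0] is a junk value, taken outside [R]. *)
Definition set_bij (t : T) : U := nth u0 (enum S) (index t (enum R)).

Hypothesis eq_card : #|R| = #|S|.

Let index_lt t : t \in R -> index t (enum R) < size (enum S).
Proof. by rewrite -cardE -eq_card cardE index_mem mem_enum. Qed.

Lemma set_bij_mem t : t \in R -> set_bij t \in S.
Proof. by move=> Rt; rewrite -mem_enum mem_nth ?index_lt. Qed.

Lemma set_bij_inj : {in R &, injective set_bij}.
Proof.
move=> t t' Rt Rt' /eqP; rewrite /set_bij nth_uniq ?enum_uniq ?index_lt // => /eqP same.
by rewrite -[t](nth_index t (s := enum R)) ?mem_enum // same nth_index ?mem_enum.
Qed.

Lemma set_bij_onto u : u \in S -> exists2 t, t \in R & set_bij t = u.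
Proof.
have sub : set_bij @: R \subset S.
  by apply/subsetP=> _ /imsetP [t Rt ->]; apply: set_bij_mem.
move: sub; rewrite subEproper properEcard card_in_imset; last exact: set_bij_inj.
rewrite eq_card ltnn andbF orbF => /eqP <- /imsetP [t Rt ->].
by exists t.
Qed.

End SetBijection.

Section Construction.
Variable X : finType.
(* [None] is the point at infinity and [Some (x, i)] the [i]-th copy of [x]. *)
Local Notation point := (option (X * 'I_3)).

Definition group_points (Gr : {set X}) : {set point} :=
  [set u | if u is Some p then p.1 \in Gr else true].

Definition group_weight (Gr : {set X}) (u v : point) : nat :=
  (u \in group_points Gr) && (v \in group_points Gr).

Definition block_weight (B : {set X}) (u v : point) : nat :=
  if (u, v) is (Some p, Some q) then [&& p.1 \in B, q.1 \in B & p.1 != q.1] else false.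

Lemma card_group_points Gr : #|group_points Gr| = 3 * #|Gr| + 1.
Proof.
have -> : group_points Gr = None |: [set Some p | p in setX Gr [set: 'I_3]].
  apply/setP=> [[[x i]|]]; rewrite !inE //=.
  apply/idP/imsetP=> [xGr | [[x' i'] Gr_p [-> _]]].
    by exists (x, i); rewrite ?inE ?xGr.
  by move: Gr_p; rewrite inE => /andP [].
rewrite cardsU1 card_imset; last by move=> p q [].
have -> : None \notin [set Some p | p in setX Gr [set: 'I_3]] by apply/imsetP=> [[]].
by rewrite cardsX cardsT card_ord mulnC addnC.
Qed.

Lemma KGDD_block_count K L G A (x y : X) : KGDD K L G A ->
  \sum_(B in A) ([&& x \in B, y \in B & x != y] : nat) = (pblock G x != pblock G y).
Proof.
move=> [partG _ _ once pairs].
have [same | differ] := eqVneq (pblock G x) (pblock G y).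
  apply: big1 => B /once once_B; apply/eqP; rewrite eqb0 andbA.
  have [_ | xy] := eqVneq x y; first by rewrite andbF.
  by rewrite andbT (meets_groups_once_pblock partG).
have xy : x != y by apply: contraNneq differ => ->.
rewrite /= -(pairs x y); last exact/diff_groupsE.
rewrite -(sum1dep_card (fun B => (B \in A) && ((x \in B) && (y \in B)))) big_mkcondr /=.
by apply: eq_bigr => B _; rewrite xy andbT; case: (_ && _).
Qed.

Lemma KGDD_weights_sum K L G A u v : KGDD K L G A -> u != v ->
  \sum_(Gr in G) group_weight Gr u v + \sum_(B in A) block_weight B u v = 1.
Proof.
move=> gdd; have [partG _ _ _ _] := gdd.
case: u v => [[x i]|] [[y j]|] // _.
- under eq_bigr => Gr _ do rewrite /group_weight !inE /=.
  by rewrite (sum_pblock2 partG) (KGDD_block_count _ _ gdd) addnC addn_negb.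
- under eq_bigr => Gr _ do rewrite /group_weight !inE /= andbT -[x \in Gr]andbb.
  by rewrite (sum_pblock2 partG) eqxx big1.
- under eq_bigr => Gr _ do rewrite /group_weight !inE /= -[y \in Gr]andbb.
  by rewrite (sum_pblock2 partG) eqxx big1.
Qed.

Lemma group_design (Gr : {set X}) (T : finType) (bs : seq {set T}) :
  nested_BIBD (3 * #|Gr| + 1) 4 1 bs ->
  exists bs' ps', nested_design (group_weight Gr) bs' ps'.
Proof.
move=> /[dup] [[[card_T _ _] _]]; rewrite -card_T => /nested_BIBDP [ps D].
have eq_card : #|[set: T]| = #|group_points Gr| by rewrite cardsT card_group_points.
pose f := set_bij [set: T] (group_points Gr) None.
have f_inj : injective f by move=> a b; apply: (set_bij_inj eq_card); rewrite inE.
have f_group a : f a \in group_points Gr by rewrite (set_bij_mem None eq_card) ?inE.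
have f_onto u : u \in group_points Gr -> u \in codom f.
  by case/(set_bij_onto None eq_card) => a _ <-; apply: codom_f.
exists (imset_blocks f bs), (map f ps); apply: nested_design_image => //.
  by apply: nested_design_eq D => a b _; rewrite /group_weight !f_group.
by move=> u v _; rewrite lt0b => /andP [/f_onto -> /f_onto ->].
Qed.

Section BlockDesign.
Variables (x0 : X) (B : {set X}) (T : finType) (GT : {set {set T}}).
Hypotheses (partGT : partition GT [set: T]) (card_GT : #|GT| = #|B|).
Hypothesis card_groups : forall P, P \in GT -> #|P| = 3.

(* The groups of [GT] become the triples over the points of [B]. *)
Definition triple_point (t : T) : point :=
  Some (set_bij GT B x0 (pblock GT t), set_bij (pblock GT t) [set: 'I_3] ord0 t).

Let card_group P : P \in GT -> #|P| = #|[set: 'I_3]|.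
Proof. by rewrite cardsT card_ord; apply: card_groups. Qed.

Lemma triple_point_inj : injective triple_point.
Proof.
move=> a b [eq_group eq_index].
have same : pblock GT a = pblock GT b.
  by apply: (set_bij_inj card_GT) eq_group; apply: pblockT_mem.
move: eq_index; rewrite same; apply: (set_bij_inj (card_group (pblockT_mem partGT b))).
  by rewrite -same mem_pblockT.
exact: mem_pblockT.
Qed.

Lemma block_weight_triple a b :
  block_weight B (triple_point a) (triple_point b) = (pblock GT a != pblock GT b).
Proof.
rewrite /block_weight /= !(set_bij_mem x0 card_GT) ?pblockT_mem //=.
by rewrite (inj_in_eq (set_bij_inj card_GT)) ?pblockT_mem.
Qed.

Lemma triple_point_onto x i : x \in B -> Some (x, i) \in codom triple_point.
Proof.
case/(set_bij_onto x0 card_GT) => P GT_P <-.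
have [t Pt <-] := set_bij_onto ord0 (card_group GT_P) (in_setT i).
by rewrite -(def_pblock _ GT_P Pt) ?codom_f //; case/and3P: partGT.
Qed.

End BlockDesign.

Lemma block_design (x0 : X) (B : {set X}) (T : finType) (GT : {set {set T}})
    (bs : seq {set T}) :
  nested_GDD 4 1 3 #|B| GT bs ->
  exists bs' ps', nested_design (block_weight B) bs' ps'.
Proof.
move=> /[dup] [[[[_ partGT card_GT card_groups] _ _ _] _]] /nested_GDD_design [ps D].
pose f := triple_point x0 B GT.
exists (imset_blocks f bs), (map f ps); apply: nested_design_image.
- exact: triple_point_inj.
- by apply: nested_design_eq D => a b _; rewrite block_weight_triple.
move=> [[x i]|] [[y j]|] //= _; rewrite lt0b => /and3P [xB yB _].
by rewrite !triple_point_onto.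
Qed.

End Construction.

Theorem mainTheorem8 (K L : nat -> Prop)
  (hK : forall k, K k -> 0 < k) (hL : forall l, L l -> 0 < l)
  (X : finType) (G : {set {set X}}) (A : {set {set X}}) :
  KGDD K L G A ->
  (forall k, K k -> exists (T : finType) (GT : {set {set T}}) (bs : seq {set T}),
       nested_GDD 4 1 3 k GT bs) ->
  (forall l, L l -> exists (T : finType) (bs : seq {set T}),
       nested_BIBD (3 * l + 1) 4 1 bs) ->
  exists (T : finType) (bs : seq {set T}), nested_BIBD (3 * #|X| + 1) 4 1 bs.
Proof.
move=> gdd GDDs BIBDs; have [_ size_group size_block _ _] := gdd.
have [bsG [psG DG]] : exists bs ps,
    nested_design (fun u v => \sum_(Gr in G) group_weight Gr u v) bs ps.
  apply: nested_design_sum => Gr /size_group /BIBDs [T [bs D]].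
  exact: group_design D.
have [bsA [psA DA]] : exists bs ps,
    nested_design (fun u v => \sum_(B in A) block_weight B u v) bs ps.
  apply: nested_design_sum => B /size_block size_B.
  have [x0 _] := card_gt0P (hK _ size_B).
  have [T [GT [bs D]]] := GDDs _ size_B.
  exact: (block_design x0 D).
exists (option (X * 'I_3)), (bsG ++ bsA).
have -> : 3 * #|X| + 1 = #|{: option (X * 'I_3)}|.
  by rewrite card_option card_prod card_ord mulnC addn1.
apply/nested_BIBDP; exists (psG ++ psA).
apply: nested_design_eq (nested_design_cat DG DA) => u v.
exact: KGDD_weights_sum gdd.
Qed.
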